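(* Let $\mathcal C$ be a linear $[n,k]$ MDS code over $F$. Then $\mathcal C$ is $L$-MDS for every $L\in\mathbb Z^+$ with $L\ge\binom{n}{k}-k(n-k)$.
   Context: $F=\mathrm{GF}(q)$; $\mathsf w(\cdot)$ is Hamming weight. For $L\in\mathbb Z^+$ and nonnegative $\tau\in\frac{1}{L+1}\mathbb Z$, a code $\mathcal C\subseteq F^n$ is strongly-$(\tau,L)$-list decodable if there do not exist $y\in F^n$ and $L+1$ distinct codewords $c_0,\dots,c_L\in\mathcal C$ with $\sum_{m=0}^{L}\mathsf w(y-c_m)\le(L+1)\tau$. A linear $[n,k]$ code over $F$ is called $L$-MDS if it is strongly-$\left(\frac{L(n-k)}{L+1},L\right)$-list decodable; equivalently, any $L+1$ distinct vectors lying in a common coset of the code have total Hamming weight greater than $L(n-k)$. *)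

From HB Require Import structures.
From mathcomp Require Import all_boot all_order all_algebra all_field.
Set Implicit Arguments. Unset Strict Implicit. Unset Printing Implicit Defensive.
Import GRing.Theory.
Local Open Scope ring_scope.

Definition hwt (F : fieldType) (n : nat) (v : 'rV[F]_n) : nat :=
  #|[set i : 'I_n | v 0 i != 0]|.

Definition linear_code (F : fieldType) (n k : nat) (C : {vspace 'rV[F]_n}) : Prop :=
  \dim C = k.

(* MDS: minimum distance n - k + 1 (meets the Singleton bound), i.e. every
   nonzero codeword has Hamming weight at least n - k + 1. *)
Definition MDS_code (F : fieldType) (n k : nat) (C : {vspace 'rV[F]_n}) : Prop :=
  forall c : 'rV[F]_n, c \in C -> c != 0 -> (n - k + 1 <= hwt c)%N.

(* strongly-(tau,L)-list decodable, with the radius given as (L+1)*tau = R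
   (a natural number): there is no y and L+1 distinct codewords c_0..c_L with
   sum_m w(y - c_m) <= R. *)
Definition strongly_list_decodable_scaled (F : fieldType) (n : nat)
  (C : {vspace 'rV[F]_n}) (R L : nat) : Prop :=
  ~ exists (y : 'rV[F]_n) (c : 'I_L.+1 -> 'rV[F]_n),
      [/\ injective c, (forall m, c m \in C) &
          (\sum_(m < L.+1) hwt (y - c m) <= R)%N].

(* L-MDS: strongly-(L(n-k)/(L+1), L)-list decodable; (L+1)*tau = L(n-k). *)
Definition L_MDS (F : fieldType) (n k L : nat) (C : {vspace 'rV[F]_n}) : Prop :=
  strongly_list_decodable_scaled C (L * (n - k)) L.

(* Let y be a received word and c_0, ..., c_L distinct codewords, and let A_m be
   the set of positions where y and c_m agree.  Two codewords of an [n,k] MDS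
   code agreeing on k positions are equal, so every k-subset of positions lies
   in at most one A_m, whence  sum_m C(|A_m|, k) <= C(n, k).  The affine bound
   C(a, k) >= k (a - k) + 1 then turns a total weight sum_m (n - |A_m|) of at
   most L (n - k) into  L + 1 + k (n - k) <= C(n, k),  contradicting the
   assumption on L. *)
From HB Require Import structures.
From mathcomp Require Import all_boot all_order all_algebra all_field zify.
Set Implicit Arguments.
Unset Strict Implicit.
Unset Printing Implicit Defensive.
Import GRing.Theory.
Local Open Scope ring_scope.

Lemma hwt_eq0 (F : fieldType) n (v : 'rV[F]_n) : (hwt v == 0%N) = (v == 0).
Proof.
rewrite /hwt cards_eq0; apply/eqP/eqP => [v0 | ->].
  apply/rowP => i; rewrite mxE; apply/eqP/negP => /negP vi.
  by have := in_set0 i; rewrite -v0 inE vi.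
by apply/setP => i; rewrite !inE mxE eqxx.
Qed.

Definition agree (F : fieldType) n (u v : 'rV[F]_n) : {set 'I_n} :=
  [set i | u 0 i == v 0 i].

Lemma card_agree_add_hwt (F : fieldType) n (u v : 'rV[F]_n) :
  (#|agree u v| + hwt (u - v))%N = n.
Proof.
rewrite /hwt -[RHS](card_ord n) -(cardsC (agree u v)); congr (_ + _)%N.
by apply: eq_card => i; rewrite !inE !mxE subr_eq0.
Qed.

(* C(a, k) >= k (a - k) + 1, with the subtraction moved to the other side. *)
Lemma leq_bin_affine k a : (1 + k * a <= 'C(a, k) + k * k)%N.
Proof.
case: k => [|j]; first by rewrite bin0.
case: (ltnP a j.+1) => ha; first by rewrite bin_small //; nia.
have [d ->] : exists d, a = (j.+1 + d)%N by exists (a - j.+1)%N; lia.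
elim: d => [|d IH]; first by rewrite addn0 binn; nia.
have bin_ge : (j.+1 <= 'C(j.+1 + d, j))%N.
  have := leq_bin2l j (leq_addr d j.+1).
  by rewrite -(bin_sub (leqnSn j)) subSnn bin1.
rewrite addnS binS; nia.
Qed.

(* Double counting of the pairs (m, S) with S a k-subset of A m. *)
Lemma sum_bin_card_le (T I : finType) k (A : I -> {set T}) :
  (forall m1 m2 (S : {set T}),
     #|S| = k -> S \subset A m1 -> S \subset A m2 -> m1 = m2) ->
  (\sum_m 'C(#|A m|, k) <= 'C(#|T|, k))%N.
Proof.
move=> A_uniq.
under eq_bigr => m _ do rewrite -cards_draws -sum1_card big_mkcond /=.
rewrite exchange_big /= -card_draws -sum1_card [X in (_ <= X)%N]big_mkcond /=.
apply: leq_sum => S _; rewrite -big_mkcond sum1_card inE.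
rewrite (eq_card (B := [pred m | S \subset A m & #|S| == k])) => [|m]; last first.
  (* after [exchange_big] the summand set appears applied to [S] as a function *)
  by rewrite -[LHS]/(S \in [set A0 : {set T} | A0 \subset A m & #|A0| == k]) inE.
case: eqP => [cardS | _]; last by rewrite leqn0 eq_card0 // => m; rewrite inE andbF.
apply/card_le1_eqP => m1 m2; rewrite !inE !andbT => S1 S2.
exact: A_uniq cardS S2 S1.
Qed.

Section MDSAgreement.

Variables (F : fieldType) (n k : nat) (C : {vspace 'rV[F]_n}).
Hypothesis C_MDS : MDS_code k C.

Lemma MDS_eq_of_agree (u v : 'rV[F]_n) (S : {set 'I_n}) :
  u \in C -> v \in C -> #|S| = k -> S \subset agree u v -> u = v.
Proof.
move=> uC vC cardS Suv; apply/eqP; rewrite -subr_eq0; apply/negPn/negP => uv_neq0.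
have wt_ge := C_MDS (memvB uC vC) uv_neq0.
suff wt_le : (hwt (u - v) <= n - k)%N by move: (leq_trans wt_ge wt_le); rewrite addn1 ltnn.
rewrite -cardS -[n in (n - _)%N](card_ord n) -(cardsC S) addKn.
apply: subset_leq_card; apply/subsetP => i; rewrite !inE !mxE subr_eq0.
by apply: contra => /(subsetP Suv); rewrite inE.
Qed.

Lemma MDS_sum_bin_agree (I : finType) (y : 'rV[F]_n) (c : I -> 'rV[F]_n) :
  injective c -> (forall m, c m \in C) ->
  (\sum_m 'C(#|agree y (c m)|, k) <= 'C(n, k))%N.
Proof.
move=> c_inj cC; rewrite -[n in 'C(n, _)](card_ord n).
apply: sum_bin_card_le => m1 m2 S cardS S1 S2; apply: c_inj.
apply: (MDS_eq_of_agree (cC m1) (cC m2) cardS).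
apply/subsetP => i iS; move: (subsetP S1 i iS) (subsetP S2 i iS).
by rewrite !inE => /eqP <- /eqP <-.
Qed.

Lemma MDS_sum_card_agree (I : finType) (y : 'rV[F]_n) (c : I -> 'rV[F]_n) :
  injective c -> (forall m, c m \in C) ->
  (#|I| + k * \sum_m #|agree y (c m)| <= 'C(n, k) + #|I| * (k * k))%N.
Proof.
move=> c_inj cC.
rewrite -sum_nat_const -sum1_card big_distrr -big_split /=.
apply: leq_trans; first by apply: leq_sum => m _; apply: leq_bin_affine.
by rewrite big_split leq_add2r MDS_sum_bin_agree.
Qed.

End MDSAgreement.

Theorem mainTheorem12 (F : finFieldType) (n k : nat) (C : {vspace 'rV[F]_n}) :
  linear_code k C -> MDS_code k C ->
  forall L : nat, (0 < L)%N -> ('C(n, k) - k * (n - k) <= L)%N ->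
  L_MDS k L C.
Proof.
move=> _ C_MDS L L_gt0 L_ge [y [c [c_inj cC wt_le]]].
have [n_le_k | k_lt_n] := leqP n k.
  move: wt_le; rewrite (eqnP n_le_k) muln0 leqn0 sum_nat_eq0 => /forallP wt0.
  have c_eq_y m : c m = y by apply/eqP; rewrite eq_sym -subr_eq0 -hwt_eq0; exact: wt0.
  have /(congr1 val) /= := c_inj ord0 ord_max (etrans (c_eq_y _) (esym (c_eq_y _))).
  lia.
have agree_wt : (\sum_(m < L.+1) #|agree y (c m)| + \sum_(m < L.+1) hwt (y - c m)
                 = L.+1 * n)%N.
  rewrite -big_split /= (eq_bigr (fun=> n)) => [|m _]; last exact: card_agree_add_hwt.
  by rewrite sum_nat_const card_ord.
have := MDS_sum_card_agree C_MDS y c_inj cC; rewrite card_ord.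
move: (\sum_(m < L.+1) #|_|)%N agree_wt => agr agree_wt count_bound.
have agr_ge : (L.+1 * n <= agr + L * (n - k))%N by lia.
have [d n_eq] : exists d, n = (k + d)%N by exists (n - k)%N; lia.
move: count_bound agr_ge L_ge; rewrite n_eq addKn; nia.
Qed.
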